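(* Let $G$ be a directed graph with vertices $s,t$ and $k\ge1$. For any $C_1,C_2\in L^*$ and any $e\in E(C_1)\cup E(C_2)$, it holds that $\max(\mu_e(C_1\vee C_2),\mu_e(C_1\wedge C_2))\le\max(\mu_e(C_1),\mu_e(C_2))$.
   Context: An $s$-$t$ cut of a directed graph $G$ is a set $X\subseteq E(G)$ such that removing $X$ leaves no directed $s$-$t$ path; $\Gamma_G(s,t)$ is the set of $s$-$t$ cuts of minimum cardinality. Fix a maximum-size collection $\mathcal P$ of pairwise edge-disjoint directed $s$-$t$ paths (each minimum $s$-$t$ cut contains exactly one edge of each path in $\mathcal P$). For $X,Y\in\Gamma_G(s,t)$, $S_{\min}(X\cup Y)$ (resp. $S_{\max}(X\cup Y)$) consists, for each $p\in\mathcal P$, of the edge of $(X\cup Y)\cap p$ occurring first (resp. last) along $p$. $X\le Y$ means every directed $s$-$t$ path meets an edge of $X$ at or before an edge of $Y$. $U^k_{\mathrm{lr}}$ is the set of $k$-tuples $[X_1,\dots,X_k]$ of elements of $\Gamma_G(s,t)$ with $X_i\le X_j$ for all $i<j$. $L^*$ is the lattice on $U^k_{\mathrm{lr}}$ with componentwise order, join $[X_i]_i\vee[Y_i]_i=[S_{\max}(X_i\cup Y_i)]_i$ and meet $[X_i]_i\wedge[Y_i]_i=[S_{\min}(X_i\cup Y_i)]_i$. For $C=[X_1,\dots,X_k]$, $E(C)=\bigcup_i X_i$ and $\mu_e(C)$ is the number of indices $i$ with $e\in X_i$. *)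

From mathcomp Require Import all_boot.
Set Implicit Arguments. Unset Strict Implicit. Unset Printing Implicit Defensive.

Section Cuts.
Variables (V E : finType) (src tgt : E -> V).

Fixpoint walk_from (x : V) (p : seq E) : bool :=
  if p is e :: p' then (src e == x) && walk_from (tgt e) p' else true.

Definition is_path (s t : V) (p : seq E) : bool :=
  [&& walk_from s p, last s (map tgt p) == t & uniq (s :: map tgt p)].

Definition is_cut (s t : V) (X : {set E}) : Prop :=
  forall p, is_path s t p -> has (fun e => e \in X) p.

Definition is_min_cut (s t : V) (X : {set E}) : Prop :=
  is_cut s t X /\ forall Y : {set E}, is_cut s t Y -> #|X| <= #|Y|.

Definition edge_disjoint_paths (s t : V) (P : seq (seq E)) : Prop :=
  (forall p, p \in P -> is_path s t p) /\
  (forall i j, i < size P -> j < size P -> i != j ->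
     forall e, e \in nth [::] P i -> e \notin nth [::] P j).

Definition max_disjoint_paths (s t : V) (P : seq (seq E)) : Prop :=
  edge_disjoint_paths s t P /\
  forall Q, edge_disjoint_paths s t Q -> size Q <= size P.

Definition Smin (P : seq (seq E)) (Z : {set E}) : {set E} :=
  [set e | has (fun p => [&& e \in p, e \in Z &
              all (fun f => f \notin Z) (take (index e p) p)]) P].

Definition Smax (P : seq (seq E)) (Z : {set E}) : {set E} :=
  [set e | has (fun p => [&& e \in p, e \in Z &
              all (fun f => f \notin Z) (drop (index e p).+1 p)]) P].

Definition cut_le (s t : V) (X Y : {set E}) : Prop :=
  forall p, is_path s t p ->
    find (fun e => e \in X) p <= find (fun e => e \in Y) p.

Definition in_Ulr (s t : V) (k : nat) (C : 'I_k -> {set E}) : Prop :=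
  (forall i, is_min_cut s t (C i)) /\
  (forall i j : 'I_k, i < j -> cut_le s t (C i) (C j)).

Definition Ljoin (P : seq (seq E)) k (C D : 'I_k -> {set E}) : 'I_k -> {set E} :=
  fun i => Smax P (C i :|: D i).
Definition Lmeet (P : seq (seq E)) k (C D : 'I_k -> {set E}) : 'I_k -> {set E} :=
  fun i => Smin P (C i :|: D i).

Definition Eof k (C : 'I_k -> {set E}) : {set E} := \bigcup_(i < k) C i.
Definition mu k (e : E) (C : 'I_k -> {set E}) : nat := #|[set i : 'I_k | e \in C i]|.

End Cuts.

From mathcomp Require Import all_boot zify.
Set Implicit Arguments. Unset Strict Implicit. Unset Printing Implicit Defensive.

(* Every minimum cut X meets each path of P in exactly one edge: it meets each
   of the |P| edge-disjoint paths, and |X| <= |P| because a maximum packing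
   leaves no augmenting path, so the vertices reachable from s in the residual
   graph span a cut of size |P|.  Fix a path p of P through e (if there is
   none, e lies in no S_min or S_max).  On p a minimum cut is described by the
   position of its edge, the edge of S_max (X :|: Y) (resp. S_min (X :|: Y)) sits
   at the maximum (resp. minimum) of the positions for X and Y, and mu_e counts
   the indices i whose position is that of e.  The positions a_i, b_i for C1
   and C2 are nondecreasing in i; an index with max (a_i, b_i) = q <> a_i and
   one with max (a_j, b_j) = q <> b_j would have a_i < a_j but b_i > b_j.  So
   the indices counted for the join are all counted for C1 or all for C2, and
   likewise for the meet. *)

Section UniqueWitness.
Variables (T : eqType) (a : pred T) (p : seq T).
Hypothesis count_a1 : count a p = 1.

Let has_a : has a p. Proof. by rewrite has_count count_a1. Qed.

Lemma all_notin_take n : all (fun x => ~~ a x) (take n p) = (n <= find a p).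
Proof. by rewrite all_predC (has_take n has_a) -leqNgt. Qed.

Lemma all_notin_drop n : all (fun x => ~~ a x) (drop n p) = (find a p < n).
Proof.
have := count_cat a (take n p) (drop n p); rewrite cat_take_drop count_a1.
by rewrite all_predC -(has_take n has_a) !has_count; case: count => [|[]] //; case: count.
Qed.

Lemma find_eq_index x : x \in p -> a x = (find a p == index x p).
Proof.
move=> xp; have xi := nth_index x xp.
apply/idP/eqP => [ax | eq_fi]; last by rewrite -xi -eq_fi nth_find.
apply/eqP; rewrite eqn_leq; apply/andP; split.
  by rewrite leqNgt; apply/negP => /(before_find x); rewrite xi ax.
have : has a (drop (index x p) p) by rewrite (drop_nth x) ?index_mem //= xi ax.
by rewrite -[has _ _]negbK -all_predC all_notin_drop -leqNgt.
Qed.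
End UniqueWitness.

Lemma sum_indicator (T : finType) (R : {set T}) (x : T) :
  \sum_(v in R) (x == v : nat) = (x \in R).
Proof.
case: (boolP (x \in R)) => [xR | xNR].
  rewrite (bigD1 x) //= eqxx big1 // => v /andP[_ vNx].
  by rewrite eq_sym (negbTE vNx).
by rewrite big1 // => v vR; apply/eqP; rewrite eqb0; apply: contraNneq xNR => ->.
Qed.

Lemma sum_indicator_card (T : finType) (A : {set T}) (P : pred T) :
  \sum_(x in A) (P x : nat) = #|[set x in A | P x]|.
Proof. by rewrite -sum1dep_card big_mkcondr; apply: eq_bigr => x _; case: (P x). Qed.

Lemma sum_pos_le_size_eq1 (I : eqType) (r : seq I) (f : I -> nat) :
  (forall i, i \in r -> 0 < f i) -> \sum_(i <- r) f i <= size r ->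
  forall i, i \in r -> f i = 1.
Proof.
move=> f_pos le_sum; have : \sum_(i <- r | i \in r) (f i - 1) == 0.
  by rewrite sumnB => [|i /f_pos //]; rewrite -!big_seq sum1_size subn_eq0.
rewrite sum_nat_seq_eq0 => /allP sub_eq0 i ir.
by move: (sub_eq0 i ir) (f_pos i ir); rewrite ir /= subn_eq0; lia.
Qed.

Lemma count_mem_le_card (T : finType) (A : {set T}) l :
  uniq l -> count (fun x => x \in A) l <= #|A|.
Proof.
move=> ul; rewrite -size_filter; have /card_uniqP <- := filter_uniq (mem A) ul.
by apply/subset_leq_card/subsetP => x; rewrite mem_filter => /andP[].
Qed.

Lemma card_le_maxn (I : finType) (S A B : {set I}) :
  (S \subset A) || (S \subset B) -> #|S| <= maxn #|A| #|B|.
Proof. by case/orP => /subset_leq_card le_S; rewrite leq_max le_S ?orbT. Qed.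

Section Comonotone.
Variables (I : finType) (a b : I -> nat).
Hypothesis comono : forall i j, a i < a j -> b i <= b j.

Lemma card_maxn_eq q :
  #|[set i | maxn (a i) (b i) == q]| <= maxn #|[set i | a i == q]| #|[set i | b i == q]|.
Proof.
apply: card_le_maxn; case: (boolP (_ \subset _)) => //= /subsetPn[i].
rewrite !inE => maxi ai.
by apply/subsetP => j; rewrite !inE => maxj; have := @comono i j; lia.
Qed.

Lemma card_minn_eq q :
  #|[set i | minn (a i) (b i) == q]| <= maxn #|[set i | a i == q]| #|[set i | b i == q]|.
Proof.
apply: card_le_maxn; case: (boolP (_ \subset _)) => //= /subsetPn[i].
rewrite !inE => mini ai.
by apply/subsetP => j; rewrite !inE => minj; have := @comono j i; lia.
Qed.

End Comonotone.

Lemma nondecreasing_comonotone k (a b : 'I_k -> nat) :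
  (forall i j : 'I_k, i < j -> a i <= a j) -> (forall i j : 'I_k, i < j -> b i <= b j) ->
  forall i j, a i < a j -> b i <= b j.
Proof.
move=> mono_a mono_b i j; case: (ltngtP i j) => [/mono_b // | /mono_a | /val_inj -> //].
by rewrite leqNgt => /negbTE ->.
Qed.

(** * Flows carried by edge sets *)

Section Flows.
Variables (V E : finType) (src tgt : E -> V) (s t : V).

Definition outflow (F : {set E}) v := \sum_(e in F) (src e == v : nat).
Definition inflow (F : {set E}) v := \sum_(e in F) (tgt e == v : nat).

(* [F] is the support of a 0/1 flow of value [n] out of [s]; nothing is
   required at [t]. *)
Definition is_flow (F : {set E}) n :=
  forall v, v != t -> outflow F v = inflow F v + (v == s) * n.

Lemma sum_outflow (R : {set V}) F :
  \sum_(v in R) outflow F v = \sum_(e in F) (src e \in R : nat).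
Proof. by rewrite exchange_big; apply: eq_bigr => e _; apply: sum_indicator. Qed.

Lemma sum_inflow (R : {set V}) F :
  \sum_(v in R) inflow F v = \sum_(e in F) (tgt e \in R : nat).
Proof. by rewrite exchange_big; apply: eq_bigr => e _; apply: sum_indicator. Qed.

Lemma flow_across_cut (R : {set V}) F n : s \in R -> t \notin R -> is_flow F n ->
  \sum_(e in F) (src e \in R : nat) = \sum_(e in F) (tgt e \in R : nat) + n.
Proof.
move=> sR tNR flowF; rewrite -sum_outflow -sum_inflow.
rewrite (eq_bigr (fun v => inflow F v + (v == s) * n)); last first.
  by move=> v vR; apply: flowF; apply: contraNneq tNR => <-.
rewrite big_split /=; congr (_ + _).
by rewrite (bigD1 s) //= eqxx mul1n big1 ?addn0 // => v /andP[_ /negbTE ->].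
Qed.

Lemma outflowU (A B : {set E}) v : [disjoint A & B] ->
  outflow (A :|: B) v = outflow A v + outflow B v.
Proof. by move=> dAB; rewrite /outflow -bigU //; apply: eq_bigl => e; rewrite !inE. Qed.

Lemma inflowU (A B : {set E}) v : [disjoint A & B] ->
  inflow (A :|: B) v = inflow A v + inflow B v.
Proof. by move=> dAB; rewrite /inflow -bigU //; apply: eq_bigl => e; rewrite !inE. Qed.

Lemma is_flowU (A B : {set E}) m n : [disjoint A & B] ->
  is_flow A m -> is_flow B n -> is_flow (A :|: B) (m + n).
Proof.
move=> dAB fA fB v vt; rewrite outflowU // inflowU // fA // fB //.
by case: (v == s); lia.
Qed.

Lemma is_flowD (A B : {set E}) m n : [disjoint A & B] ->
  is_flow (A :|: B) (m + n) -> is_flow A m -> is_flow B n.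
Proof.
move=> dAB fAB fA v vt; have := fAB v vt; rewrite outflowU // inflowU // fA //.
by case: (v == s); lia.
Qed.

Lemma walk_balance x p v : walk_from src tgt x p ->
  count (fun e => src e == v) p + (last x (map tgt p) == v) =
  count (fun e => tgt e == v) p + (x == v).
Proof.
elim: p x => [|e p IHp] x //= /andP[/eqP <- /IHp]; lia.
Qed.

Lemma path_uniq p : is_path src tgt s t p -> uniq p.
Proof. by case/and3P => _ _ /= /andP[_ /map_uniq]. Qed.

Lemma outflow_seq p v :
  uniq p -> outflow [set e in p] v = count (fun e => src e == v) p.
Proof.
move=> up; rewrite /outflow (eq_bigl (mem p)) => [|e]; last by rewrite inE.
by rewrite -big_uniq // -sumn_count sumnE big_map.
Qed.

Lemma inflow_seq p v :
  uniq p -> inflow [set e in p] v = count (fun e => tgt e == v) p.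
Proof.
move=> up; rewrite /inflow (eq_bigl (mem p)) => [|e]; last by rewrite inE.
by rewrite -big_uniq // -sumn_count sumnE big_map.
Qed.

Lemma is_flow_path p : is_path src tgt s t p -> is_flow [set e in p] 1.
Proof.
move=> pp v vt; have up := path_uniq pp; rewrite outflow_seq // inflow_seq //.
case/and3P: pp => walk_p /eqP last_p _; have := walk_balance v walk_p.
by rewrite last_p eq_sym (negbTE vt) [s == v]eq_sym muln1; lia.
Qed.

Definition path_edges (Q : seq (seq E)) : {set E} := [set e in flatten Q].

Lemma path_edges_cons p Q : path_edges (p :: Q) = [set e in p] :|: path_edges Q.
Proof. by apply/setP => e; rewrite !inE mem_cat. Qed.

Lemma edge_disjoint_paths_cons p Q :
  edge_disjoint_paths src tgt s t (p :: Q) <->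
  [/\ is_path src tgt s t p, edge_disjoint_paths src tgt s t Q &
      [disjoint [set e in p] & path_edges Q]].
Proof.
split=> [[pathQ disjQ] | [pp [pathQ disjQ] dpQ]].
  split.
  - by apply: pathQ; rewrite mem_head.
  - split=> [q qQ | i j ? ? ?]; last exact: (disjQ i.+1 j.+1).
    by apply: pathQ; rewrite in_cons qQ orbT.
  - apply/pred0P => e /=; rewrite !inE; apply/andP => -[ep /flattenP[q qQ eq]].
    have := disjQ 0 (index q Q).+1 erefl; rewrite /= ltnS index_mem nth_index //.
    by move=> /(_ qQ erefl e ep); rewrite eq.
have dj q e : q \in Q -> e \in p -> e \notin q.
  move=> qQ ep; have /(disjointFr dpQ) : e \in [set x in p] by rewrite inE.
  by rewrite inE => /negbT; apply: contra => eq; apply/flattenP; exists q.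
split=> [q | [|i] [|j] //= iQ jQ ij e].
- by rewrite in_cons => /orP[/eqP-> | /pathQ].
- by apply: dj; rewrite mem_nth.
- by apply: contraTN => /dj; apply; rewrite mem_nth.
- exact: disjQ.
Qed.

Lemma is_flow_path_edges Q :
  edge_disjoint_paths src tgt s t Q -> is_flow (path_edges Q) (size Q).
Proof.
elim: Q => [_ v _ | p Q IHQ /edge_disjoint_paths_cons[pp dQ dpQ]].
  by rewrite /outflow /inflow !big_pred0 ?muln0 // => e; rewrite inE.
by rewrite path_edges_cons; apply: is_flowU (is_flow_path pp) (IHQ dQ).
Qed.

Definition edge_rel (a b : E -> V) (A : {set E}) : rel V :=
  fun u w => [exists e, [&& e \in A, a e == u & b e == w]].

Lemma edge_rel_path_walk (a b : E -> V) A x vs : path (edge_rel a b A) x vs ->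
  exists p, [/\ walk_from a b x p, map b p = vs & {subset p <= A}].
Proof.
elim: vs x => [|v vs IHvs] x /=; first by exists [::].
case/andP => /existsP[e /and3P[eA /eqP ae /eqP be]] /IHvs[p [walk_p map_p pA]].
exists (e :: p); split => /=; first by rewrite ae eqxx be.
  by rewrite be map_p.
by move=> f; rewrite in_cons => /orP[/eqP-> | /pA].
Qed.

Lemma edge_rel_connect_walk (a b : E -> V) A x y : connect (edge_rel a b A) x y ->
  exists p, [/\ walk_from a b x p, last x (map b p) = y,
                uniq (x :: map b p) & {subset p <= A}].
Proof.
case/connectP => vs0 /shortenP[vs /edge_rel_path_walk[p [walk_p map_p pA]] uvs _] ->.
by exists p; rewrite map_p.
Qed.

Lemma flow_has_path F n : is_flow F n.+1 ->
  exists p, is_path src tgt s t p /\ {subset p <= F}.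
Proof.
move=> flowF; have [/edge_rel_connect_walk[p [walk_p last_p up pF]] | st_sep] :=
  boolP (connect (edge_rel src tgt F) s t).
  by exists p; rewrite /is_path walk_p last_p eqxx up.
pose R := [set v | connect (edge_rel src tgt F) s v].
have := @flow_across_cut R F n.+1; rewrite !inE connect0 => /(_ isT st_sep flowF).
suff : \sum_(e in F) (src e \in R : nat) <= \sum_(e in F) (tgt e \in R : nat) by lia.
apply: leq_sum => e eF; rewrite !inE; case: (boolP (connect _ s (src e))) => // s_src.
by rewrite (connect_trans s_src) // connect1 //; apply/existsP; exists e; rewrite eF !eqxx.
Qed.

Lemma flow_decomposition F n : is_flow F n -> exists Q,
  [/\ size Q = n, edge_disjoint_paths src tgt s t Q & {subset path_edges Q <= F}].
Proof.
elim: n F => [|n IHn] F flowF.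
  by exists [::]; split=> // e; rewrite inE.
have [p [pp pF]] := flow_has_path flowF.
pose F' := F :\: [set e in p].
have dpF' : [disjoint [set e in p] & F'].
  by apply/pred0P => e /=; rewrite !inE; case: (e \in p).
have defF : F = [set e in p] :|: F'.
  by apply/setP => e; rewrite !inE; case: (boolP (e \in p)) => // /pF ->.
rewrite defF -add1n in flowF.
have [Q [sizeQ dQ QF']] := IHn _ (is_flowD dpF' flowF (is_flow_path pp)).
exists (p :: Q); split; first by rewrite /= sizeQ.
  apply/edge_disjoint_paths_cons; split=> //.
  by apply: disjointWr dpF'; apply/subsetP.
by rewrite path_edges_cons defF; apply/subsetP/setUS/subsetP.
Qed.

(** * Augmenting paths *)

Definition rsrc (F : {set E}) e := if e \in F then tgt e else src e.
Definition rtgt (F : {set E}) e := if e \in F then src e else tgt e.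
Definition residual (F : {set E}) := edge_rel (rsrc F) (rtgt F) setT.
Definition toggle (F : {set E}) e := if e \in F then F :\ e else e |: F.

(* [F] is a flow of value [n] except that one of its units stops at [x]
   instead of reaching [t]. *)
Definition flow_to (F : {set E}) x n :=
  forall v, v != t -> outflow F v + (x == v) = inflow F v + (v == s) * n.

Lemma flow_to_toggle F e n :
  flow_to F (rsrc F e) n -> flow_to (toggle F e) (rtgt F e) n.
Proof.
rewrite /flow_to /toggle /rsrc /rtgt /outflow /inflow.
case: (boolP (e \in F)) => eF flowF v vt; have := flowF v vt.
  by rewrite !(big_setD1 e eF) /=; lia.
by rewrite !(big_setU1 _ eF) /=; lia.
Qed.

Lemma walk_from_belast (a b : E -> V) x p :
  walk_from a b x p -> map a p = belast x (map b p).
Proof. by elim: p x => [|e p IHp] x //= /andP[/eqP-> /IHp->]. Qed.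

(* [G] is [F] with the edges already walked through toggled; as the walk does
   not repeat edges, [G] and [F] agree on the rest of it. *)
Lemma augment_along_walk F n p x (G : {set E}) :
  walk_from (rsrc F) (rtgt F) x p -> uniq p -> {in p, G =i F} ->
  last x (map (rtgt F) p) = t -> flow_to G x n -> exists F', is_flow F' n.
Proof.
elim: p x G => [|e p IHp] x G /=.
  move=> _ _ _ -> flowG; exists G => v vt.
  by have := flowG v vt; rewrite eq_sym (negbTE vt) addn0.
case/andP => /eqP <- walk_p /andP[eNp up] GF last_p flowG.
have eGF : (e \in G) = (e \in F) by apply: GF; rewrite mem_head.
apply: (IHp (rtgt F e) (toggle G e)) => // [f fp|].
  have fNe : f != e by apply: contraNneq eNp => <-.
  have fGF : (f \in G) = (f \in F) by apply: GF; rewrite in_cons fp orbT.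
  by rewrite /toggle; case: (e \in G); rewrite !inE (negbTE fNe) fGF.
by rewrite [rtgt F e]/rtgt -eGF; apply: flow_to_toggle; rewrite /rsrc eGF.
Qed.

Lemma walk_uniq (a b : E -> V) x p :
  walk_from a b x p -> uniq (x :: map b p) -> uniq p.
Proof.
move/walk_from_belast => map_a; rewrite lastI rcons_uniq => /andP[_].
by rewrite -map_a => /map_uniq.
Qed.

Lemma walk_crosses (a b : E -> V) (R : {set V}) x p : walk_from a b x p -> x \in R ->
  last x (map b p) \notin R -> has (fun e => (a e \in R) && (b e \notin R)) p.
Proof.
elim: p x => [|e p IHp] x /=; first by move=> _ ->.
case/andP => /eqP-> walk_p aR; case: (boolP (b e \in R)) => [bR lastNR | _].
  by rewrite (IHp _ walk_p bR lastNR) orbT.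
by rewrite aR.
Qed.

Lemma max_paths_no_augmenting P : max_disjoint_paths src tgt s t P ->
  ~~ connect (residual (path_edges P)) s t.
Proof.
move=> [dP maxP]; apply/negP => /edge_rel_connect_walk[p [walk_p last_p up _]].
have flowP : flow_to (path_edges P) s (size P).+1.
  move=> v vt; rewrite (is_flow_path_edges dP vt) [s == v]eq_sym.
  by case: (v == s); lia.
have [F' /flow_decomposition[Q [sizeQ dQ _]]] :=
  augment_along_walk walk_p (walk_uniq walk_p up) (fun _ _ => erefl) last_p flowP.
by have := maxP Q dQ; rewrite sizeQ ltnn.
Qed.

Lemma residual_cut F n : is_flow F n -> ~~ connect (residual F) s t ->
  exists X, is_cut src tgt s t X /\ #|X| = n.
Proof.
move=> flowF st_sep; pose R := [set v | connect (residual F) s v].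
have sR : s \in R by rewrite inE connect0.
have tNR : t \notin R by rewrite inE.
have closedR e : rsrc F e \in R -> rtgt F e \in R.
  rewrite !inE => /connect_trans; apply; apply: connect1.
  by apply/existsP; exists e; rewrite inE !eqxx.
(* No edge of [F] enters [R] and every edge leaving [R] is in [F], so the edges
   leaving [R] carry the whole flow. *)
exists [set e in F | (src e \in R) && (tgt e \notin R)]; split.
  move=> p /and3P[walk_p /eqP last_p _]; have := walk_crosses walk_p sR.
  rewrite last_p => /(_ tNR) /hasP[e ep /andP[srcR tgtNR]].
  apply/hasP; exists e; rewrite // inE srcR tgtNR /= andbT.
  apply: contraNT tgtNR => eNF.
  by have := closedR e; rewrite /rsrc /rtgt (negbTE eNF); apply.
rewrite -sum_indicator_card; have := flow_across_cut sR tNR flowF.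
suff -> : \sum_(e in F) (src e \in R : nat) = \sum_(e in F) (tgt e \in R : nat) +
    \sum_(e in F) ((src e \in R) && (tgt e \notin R) : nat) by lia.
rewrite -big_split; apply: eq_bigr => e eF /=.
have := closedR e; rewrite /rsrc /rtgt eF.
by case: (src e \in R); case: (tgt e \in R) => // /(_ isT).
Qed.

Lemma min_cut_le_paths P X : max_disjoint_paths src tgt s t P ->
  is_min_cut src tgt s t X -> #|X| <= size P.
Proof.
move=> maxP [_ minX]; have [Y [cutY <-]] :=
  residual_cut (is_flow_path_edges (proj1 maxP)) (max_paths_no_augmenting maxP).
exact: minX.
Qed.

Lemma edge_disjoint_paths_uniq Q :
  edge_disjoint_paths src tgt s t Q -> uniq (flatten Q).
Proof.
elim: Q => // p Q IHQ /edge_disjoint_paths_cons[pp dQ dpQ].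
rewrite /= cat_uniq path_uniq // IHQ // andbT /=; apply/hasPn => e eQ.
have /(disjointFl dpQ) : e \in path_edges Q by rewrite inE.
by rewrite inE => ->.
Qed.

Lemma count_min_cut_path P X p : max_disjoint_paths src tgt s t P ->
  is_min_cut src tgt s t X -> p \in P -> count (fun f => f \in X) p = 1.
Proof.
move=> maxP minX pP; apply: (sum_pos_le_size_eq1 (r := P)) => // [q qP|].
  by rewrite -has_count; apply: (proj1 minX); apply: (proj1 (proj1 maxP)).
apply: leq_trans (min_cut_le_paths maxP minX).
have -> : \sum_(q <- P) count (fun f => f \in X) q = count (fun f => f \in X) (flatten P).
  by rewrite count_flatten sumnE big_map.
exact/count_mem_le_card/(edge_disjoint_paths_uniq (proj1 maxP)).
Qed.

End Flows.

(** * Minimum cuts along the paths of a maximum packing *)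

Section CutsOnPaths.
Variables (V E : finType) (src tgt : E -> V) (s t : V) (P : seq (seq E)).

Lemma edge_disjoint_paths_unique p q e : edge_disjoint_paths src tgt s t P ->
  p \in P -> q \in P -> e \in p -> e \in q -> p = q.
Proof.
move=> [_ disjP] pP qP ep; apply: contraTeq => pNq.
have idx_neq : index p P != index q P.
  by apply: contra pNq => /eqP idx_eq; rewrite -(nth_index [::] pP) idx_eq nth_index.
have := disjP (index p P) (index q P); rewrite !index_mem !nth_index //.
by move/(_ pP qP idx_neq e ep).
Qed.

Lemma mem_Smax p Z e : edge_disjoint_paths src tgt s t P -> p \in P -> e \in p ->
  (e \in Smax P Z) = (e \in Z) && all (fun f => f \notin Z) (drop (index e p).+1 p).
Proof.
move=> dP pP ep; rewrite inE; apply/hasP/andP => [[q qP /and3P[eq eZ Zq]] | [eZ Zp]].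
  by rewrite (edge_disjoint_paths_unique dP pP qP ep eq).
by exists p; rewrite // ep eZ.
Qed.

Lemma mem_Smin p Z e : edge_disjoint_paths src tgt s t P -> p \in P -> e \in p ->
  (e \in Smin P Z) = (e \in Z) && all (fun f => f \notin Z) (take (index e p) p).
Proof.
move=> dP pP ep; rewrite inE; apply/hasP/andP => [[q qP /and3P[eq eZ Zq]] | [eZ Zp]].
  by rewrite (edge_disjoint_paths_unique dP pP qP ep eq).
by exists p; rewrite // ep eZ.
Qed.

Lemma all_notinU (X Y : {set E}) l : all (fun f => f \notin X :|: Y) l =
  all (fun f => f \notin X) l && all (fun f => f \notin Y) l.
Proof. by rewrite -all_predI; apply: eq_all => f; rewrite !inE negb_or. Qed.

Section OnePath.
Variables (p : seq E) (e : E) (X Y : {set E}).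
Hypotheses (maxP : max_disjoint_paths src tgt s t P) (pP : p \in P) (ep : e \in p).
Hypotheses (minX : is_min_cut src tgt s t X) (minY : is_min_cut src tgt s t Y).

Let countX := count_min_cut_path maxP minX pP.
Let countY := count_min_cut_path maxP minY pP.

Lemma mem_Smax_min_cuts : (e \in Smax P (X :|: Y)) =
  (maxn (find (fun f => f \in X) p) (find (fun f => f \in Y) p) == index e p).
Proof.
rewrite (mem_Smax _ (proj1 maxP) pP ep) all_notinU.
rewrite (all_notin_drop countX) (all_notin_drop countY).
rewrite inE (find_eq_index countX ep) (find_eq_index countY ep).
(* the two copies of each [find] differ in an implicit type argument *)
by move: (find _ p) (find _ p); lia.
Qed.

Lemma mem_Smin_min_cuts : (e \in Smin P (X :|: Y)) =
  (minn (find (fun f => f \in X) p) (find (fun f => f \in Y) p) == index e p).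
Proof.
rewrite (mem_Smin _ (proj1 maxP) pP ep) all_notinU.
rewrite (all_notin_take countX) (all_notin_take countY).
rewrite inE (find_eq_index countX ep) (find_eq_index countY ep).
by move: (find _ p) (find _ p); lia.
Qed.

End OnePath.
End CutsOnPaths.

Lemma mu_eq_card (E : finType) k e (C : 'I_k -> {set E}) (f : 'I_k -> nat) q :
  (forall i, (e \in C i) = (f i == q)) -> mu e C = #|[set i | f i == q]|.
Proof. by move=> memC; apply: eq_card => i; rewrite !inE memC. Qed.

Lemma mu_eq0 (E : finType) k e (C : 'I_k -> {set E}) :
  (forall i, e \notin C i) -> mu e C = 0.
Proof.
move=> eNC; apply/eqP; rewrite cards_eq0; apply/eqP/setP => i.
by rewrite !inE (negbTE (eNC i)).
Qed.

Lemma mu_Ljoin_off_paths (E : finType) k (P : seq (seq E)) (C1 C2 : 'I_k -> {set E}) e :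
  ~~ has (fun p => e \in p) P -> mu e (Ljoin P C1 C2) = 0.
Proof.
move=> eNP; apply: mu_eq0 => i; apply: contraNN eNP.
by rewrite inE => /hasP[p pP /and3P[ep _ _]]; apply/hasP; exists p.
Qed.

Lemma mu_Lmeet_off_paths (E : finType) k (P : seq (seq E)) (C1 C2 : 'I_k -> {set E}) e :
  ~~ has (fun p => e \in p) P -> mu e (Lmeet P C1 C2) = 0.
Proof.
move=> eNP; apply: mu_eq0 => i; apply: contraNN eNP.
by rewrite inE => /hasP[p pP /and3P[ep _ _]]; apply/hasP; exists p.
Qed.

Theorem lemma4 (V E : finType) (src tgt : E -> V) (s t : V) (k : nat)
  (P : seq (seq E)) :
  0 < k ->
  max_disjoint_paths src tgt s t P ->
  forall C1 C2 : 'I_k -> {set E},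
  in_Ulr src tgt s t C1 -> in_Ulr src tgt s t C2 ->
  forall e, e \in Eof C1 :|: Eof C2 ->
  maxn (mu e (Ljoin P C1 C2)) (mu e (Lmeet P C1 C2))
    <= maxn (mu e C1) (mu e C2).
Proof.
move=> _ maxP C1 C2 [min1 le1] [min2 le2] e _.
have [/hasP[p pP ep] | eNP] := boolP (has (fun p => e \in p) P); last first.
  by rewrite mu_Ljoin_off_paths ?mu_Lmeet_off_paths.
have pp : is_path src tgt s t p by apply: (proj1 (proj1 maxP)).
pose a i := find (fun f => f \in C1 i) p; pose b i := find (fun f => f \in C2 i) p.
have comono : forall i j, a i < a j -> b i <= b j.
  apply: nondecreasing_comonotone => i j lt_ij.
    exact: le1 lt_ij p pp.
  exact: le2 lt_ij p pp.
have mu1 : mu e C1 = #|[set i | a i == index e p]|.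
  apply: mu_eq_card => i.
  by rewrite (find_eq_index (count_min_cut_path maxP (min1 i) pP) ep).
have mu2 : mu e C2 = #|[set i | b i == index e p]|.
  apply: mu_eq_card => i.
  by rewrite (find_eq_index (count_min_cut_path maxP (min2 i) pP) ep).
have mu_join : mu e (Ljoin P C1 C2) = #|[set i | maxn (a i) (b i) == index e p]|.
  by apply: mu_eq_card => i; rewrite (mem_Smax_min_cuts maxP pP ep (min1 i) (min2 i)).
have mu_meet : mu e (Lmeet P C1 C2) = #|[set i | minn (a i) (b i) == index e p]|.
  by apply: mu_eq_card => i; rewrite (mem_Smin_min_cuts maxP pP ep (min1 i) (min2 i)).
by rewrite mu1 mu2 mu_join mu_meet geq_max card_maxn_eq ?card_minn_eq.
Qed.
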